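(* Let $n\in\mathbb{N}$ and let $\Xi$ be the set of all finitely supported probability measures $\eta$ on $[-1,1]$ satisfying $\int x^\ell\,d\eta(x)=\frac12\int_{-1}^1x^\ell\,dx$ for $\ell=0,\dots,n$. For such $\eta$ let $u(\eta)=\min\{v\in\mathbb{R}^+:\mathrm{supp}\,\eta\subset[-v,v]\}$. Let $r=\lfloor n/2\rfloor+1$, let $x_1^*<\dots<x_r^*$ be the zeros of the Legendre polynomial $P_r(x)$ (orthogonal with respect to Lebesgue measure on $[-1,1]$). Then $$\min_{\eta\in\Xi}u(\eta)=|x_1^*|,$$ and the minimum is attained by the measure $\eta^*$ putting mass $w_i^*=\frac12\int_{-1}^1\ell_i(x)\,dx$ at $x_i^*$, $i=1,\dots,r$, where $\ell_i(x)=\prod_{j\ne i}\frac{x-x_j^*}{x_i^*-x_j^*}$ is the $i$-th Lagrange interpolation polynomial with nodes $x_1^*,\dots,x_r^*$. *)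

From Stdlib Require Import Reals Lra Lia List.
From Coquelicot Require Import Coquelicot.
Open Scope R_scope.

(* Legendre polynomials P_k (standard normalisation P_k(1)=1), given by
   Bonnet's recurrence (k+1) P_{k+1} = (2k+1) x P_k - k P_{k-1}. *)
Fixpoint legendre_pair (k : nat) (x : R) : R * R :=
  (* returns (P_k x, P_{k+1} x) *)
  match k with
  | O => (1, x)
  | S m =>
      let (p, q) := legendre_pair m x in
      (q, ((2 * INR m + 3) * x * q - (INR m + 1) * p) / (INR m + 2))
  end.

Definition legendre (k : nat) (x : R) : R := fst (legendre_pair k x).

(* A finitely supported measure on R is encoded as the list of its atoms
   (point, mass); the points are pairwise distinct and masses positive,
   so the list of points is exactly the support. *)
Definition fmeasure := list (R * R).

Definition total_mass (eta : fmeasure) : R :=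
  fold_right (fun p acc => snd p + acc) 0 eta.

Definition moment (eta : fmeasure) (l : nat) : R :=
  fold_right (fun p acc => snd p * (fst p) ^ l + acc) 0 eta.

Definition in_Xi (n : nat) (eta : fmeasure) : Prop :=
  NoDup (map fst eta) /\
  (forall p, In p eta -> -1 <= fst p <= 1 /\ 0 < snd p) /\
  total_mass eta = 1 /\
  (forall l : nat, (l <= n)%nat ->
     moment eta l = / 2 * RInt (fun x => x ^ l) (-1) 1).

(* u(eta) = min { v >= 0 : supp eta subset [-v,v] } = max_{x in supp} |x|
   (and 0 for the empty list, which does not occur for probability measures). *)
Definition u (eta : fmeasure) : R :=
  fold_right (fun p acc => Rmax (Rabs (fst p)) acc) 0 eta.

Definition lagrange (xs : list R) (i : nat) (x : R) : R :=
  fold_right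
    (fun j acc =>
       if Nat.eqb j i then acc
       else (x - nth j xs 0) / (nth i xs 0 - nth j xs 0) * acc)
    1 (seq 0 (length xs)).

Definition gl_weight (xs : list R) (i : nat) : R :=
  / 2 * RInt (lagrange xs i) (-1) 1.

Definition gl_measure (xs : list R) : fmeasure :=
  map (fun i => (nth i xs 0, gl_weight xs i)) (seq 0 (length xs)).

(* Gauss-Legendre quadrature, with the r zeros x_i of P_r as nodes, is exact for
   every polynomial of degree < 2r because P_r is orthogonal to all polynomials of
   lower degree; its weights are positive since w_i = 1/2 int l_i^2. As n < 2r, the
   measure eta^* lies in Xi, and its support radius is |x_1| because the nodes are
   symmetric about 0. Conversely 2r - 2 <= n, so every eta in Xi integrates exactly
   x^2 Q(x)^2 and Q(x)^2, where Q vanishes at the r - 2 interior nodes. Quadrature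
   gives int x^2 Q^2 = x_1^2 int Q^2 with int Q^2 > 0, whereas for eta the left side
   is at most u(eta)^2 times the right side; hence |x_1| <= u(eta). *)

From Stdlib Require Import Reals List Lra Lia Factorial.
From Coquelicot Require Import Coquelicot.
Open Scope R_scope.

(** * Polynomial functions *)

Fixpoint peval (cs : list R) (x : R) : R :=
  match cs with nil => 0 | c :: cs' => c + x * peval cs' x end.

Definition deg_le (f : R -> R) (d : nat) : Prop :=
  exists cs, (length cs <= S d)%nat /\ forall x, f x = peval cs x.

Lemma deg_le_ext f g d : (forall x, f x = g x) -> deg_le f d -> deg_le g d.
Proof. intros E [cs [Hl Hf]]. exists cs; split; auto. intro x; rewrite <- E; auto. Qed.

Lemma deg_le_mono f d d' : (d <= d')%nat -> deg_le f d -> deg_le f d'.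
Proof. intros H [cs [Hl Hf]]. exists cs; split; auto; lia. Qed.

Lemma deg_le_const c d : deg_le (fun _ => c) d.
Proof. exists (c :: nil); split; simpl; [lia | intros; ring]. Qed.

Fixpoint padd (cs ds : list R) : list R :=
  match cs, ds with
  | nil, _ => ds
  | _, nil => cs
  | c :: cs', d :: ds' => (c + d) :: padd cs' ds'
  end.

Lemma peval_padd cs ds x : peval (padd cs ds) x = peval cs x + peval ds x.
Proof.
  revert ds; induction cs as [|c cs IH]; intros [|d ds]; simpl; try ring.
  rewrite IH; ring.
Qed.

Lemma length_padd cs ds : length (padd cs ds) = Nat.max (length cs) (length ds).
Proof. revert ds; induction cs as [|c cs IH]; intros [|d ds]; simpl; auto. Qed.

Lemma deg_le_add f g d : deg_le f d -> deg_le g d -> deg_le (fun x => f x + g x) d.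
Proof.
  intros [cs [Hcs Hf]] [ds [Hds Hg]]. exists (padd cs ds); split.
  - rewrite length_padd; lia.
  - intro x; rewrite peval_padd, Hf, Hg; auto.
Qed.

Lemma deg_le_scal c f d : deg_le f d -> deg_le (fun x => c * f x) d.
Proof.
  intros [cs [Hl Hf]]. exists (map (Rmult c) cs); split.
  - rewrite length_map; auto.
  - intro x; rewrite Hf. clear. induction cs as [|a cs IH]; simpl; [ring|].
    rewrite <- IH; ring.
Qed.

Lemma deg_le_sub f g d : deg_le f d -> deg_le g d -> deg_le (fun x => f x - g x) d.
Proof.
  intros Hf Hg. apply deg_le_ext with (fun x => f x + (-1) * g x); [intros; ring|].
  apply deg_le_add; auto. now apply deg_le_scal.
Qed.

Lemma deg_le_mul_id f d : deg_le f d -> deg_le (fun x => x * f x) (S d).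
Proof.
  intros [cs [Hl Hf]]. exists (0 :: cs); split; simpl; [lia|].
  intro x; rewrite Hf; ring.
Qed.

Lemma deg_le_mul f g d e : deg_le f d -> deg_le g e -> deg_le (fun x => f x * g x) (d + e).
Proof.
  intros [cs [Hl Hf]] Hg. apply deg_le_ext with (fun x => peval cs x * g x).
  { intro x; rewrite Hf; auto. }
  clear Hf. revert d Hl. induction cs as [|c cs IH]; intros d Hl; simpl.
  - apply deg_le_ext with (fun _ => 0); [intros; ring | apply deg_le_const].
  - apply deg_le_ext with (fun x => c * g x + x * (peval cs x * g x)); [intros; ring|].
    apply deg_le_add.
    + apply deg_le_mono with e; [lia | now apply deg_le_scal].
    + destruct d as [|d].
      * destruct cs; simpl in Hl; [|lia].
        apply deg_le_ext with (fun _ => 0); [intros; simpl; ring | apply deg_le_const].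
      * replace (S d + e)%nat with (S (d + e)) by lia.
        apply deg_le_mul_id, IH. simpl in Hl; lia.
Qed.

Lemma deg_le_pow j : deg_le (fun x => x ^ j) j.
Proof.
  induction j as [|j IH]; simpl; [apply deg_le_const | now apply deg_le_mul_id].
Qed.

Lemma deg_le_id : deg_le (fun x => x) 1.
Proof. apply deg_le_ext with (fun x => x ^ 1); [intros; ring | apply deg_le_pow]. Qed.

Lemma deg_le_linear a b : deg_le (fun x => a * x + b) 1.
Proof. apply deg_le_add; [apply deg_le_scal, deg_le_id | apply deg_le_const]. Qed.

Lemma deg_le_continuous f d x : deg_le f d -> continuous f x.
Proof.
  intros [cs [_ Hf]]. apply continuous_ext with (peval cs); [intros; auto|].
  clear Hf. induction cs as [|c cs IH]; simpl.
  - apply continuous_const.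
  - apply (continuous_plus (fun _ => c) (fun x => x * peval cs x)).
    + apply continuous_const.
    + apply (continuous_mult (fun x => x) (peval cs)); [apply continuous_id | auto].
Qed.

Lemma deg_le_ex_RInt f d a b : deg_le f d -> ex_RInt f a b.
Proof.
  intros Hf. apply (ex_RInt_continuous (V := R_CompleteNormedModule)).
  intros; eapply deg_le_continuous; eauto.
Qed.

Lemma deg_le_0_const f : deg_le f 0 -> forall x, f x = f 0.
Proof.
  intros [cs [Hl Hf]] x. rewrite !Hf.
  destruct cs as [|c [|c' cs]]; simpl in *; try lia; ring.
Qed.

Lemma peval_div_linear cs a : exists qs, (length qs <= pred (length cs))%nat /\
  forall x, peval cs x = (x - a) * peval qs x + peval cs a.
Proof.
  induction cs as [|c cs IH].
  - exists nil; split; simpl; [lia | intros; ring].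
  - destruct cs as [|c' cs'].
    + exists nil; split; simpl; [lia | intros; ring].
    + destruct IH as [qs [Hl Hq]]. exists (peval (c' :: cs') a :: qs); split.
      * simpl in *; lia.
      * intro x. change (peval (c :: c' :: cs') x) with (c + x * peval (c' :: cs') x).
        change (peval (c :: c' :: cs') a) with (c + a * peval (c' :: cs') a).
        rewrite (Hq x). simpl; ring.
Qed.

Lemma deg_le_factor_root f d a : deg_le f (S d) -> f a = 0 ->
  exists g, deg_le g d /\ forall x, f x = (x - a) * g x.
Proof.
  intros [cs [Hl Hf]] Ha. destruct (peval_div_linear cs a) as [qs [Hq Eq]].
  exists (peval qs); split.
  - exists qs; split; auto; lia.
  - intro x. rewrite Hf, Eq, <- Hf, Ha; ring.
Qed.

Definition node_poly (l : list R) (x : R) : R :=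
  fold_right (fun a acc => (x - a) * acc) 1 l.

Lemma deg_le_node_poly l : deg_le (node_poly l) (length l).
Proof.
  induction l as [|a l IH]; simpl; [apply deg_le_const|].
  change (S (length l)) with (1 + length l)%nat.
  apply (deg_le_mul (fun x => x - a) (node_poly l)); auto.
  apply deg_le_ext with (fun x => 1 * x + - a); [intros; ring | apply deg_le_linear].
Qed.

Lemma node_poly_root a l : In a l -> node_poly l a = 0.
Proof.
  induction l as [|b l IH]; simpl; [tauto|].
  intros [->|H]; [ring | rewrite IH; auto; ring].
Qed.

Lemma node_poly_neq0 a l : ~ In a l -> node_poly l a <> 0.
Proof.
  induction l as [|b l IH]; simpl; intros H; [lra|].
  apply Rmult_integral_contrapositive; split; [intro E; apply H; left; lra | tauto].
Qed.

Lemma factor_node_poly l f d : NoDup l -> (forall a, In a l -> f a = 0) ->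
  deg_le f (length l + d) -> exists g, deg_le g d /\ forall x, f x = node_poly l x * g x.
Proof.
  revert f. induction l as [|a l IH]; intros f Hnd Hz Hf.
  - exists f; split; auto. intros; simpl; ring.
  - inversion Hnd as [|? ? Ha Hnd']; subst. simpl in Hf.
    destruct (deg_le_factor_root f (length l + d) a Hf (Hz a (or_introl eq_refl)))
      as [g1 [Hg1 Eg1]].
    destruct (IH g1 Hnd') as [g [Hg Eg]]; auto.
    + intros b Hb. assert (Hfb := Hz b (or_intror Hb)). rewrite Eg1 in Hfb.
      apply Rmult_integral in Hfb. destruct Hfb as [E|E]; auto.
      exfalso; apply Ha. replace a with b by lra. auto.
    + exists g; split; auto. intro x. rewrite Eg1, Eg. simpl; ring.
Qed.

Definition sum_idx (f : nat -> R) (l : list nat) : R :=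
  fold_right (fun i acc => f i + acc) 0 l.

Lemma sum_idx_ext f g l : (forall i, In i l -> f i = g i) -> sum_idx f l = sum_idx g l.
Proof.
  induction l as [|i l IH]; simpl; intros H; auto.
  rewrite H, IH; auto.
Qed.

Lemma sum_idx_unique f l k : NoDup l -> In k l ->
  (forall i, In i l -> i <> k -> f i = 0) -> sum_idx f l = f k.
Proof.
  induction l as [|i l IH]; simpl; intros Hnd Hk Hz; [tauto|].
  inversion Hnd as [|? ? Hi Hnd']; subst. destruct Hk as [<-|Hk].
  - rewrite (sum_idx_ext f (fun _ => 0)).
    + clear. induction l; simpl; lra.
    + intros j Hj. apply Hz; auto. intros ->; contradiction.
  - rewrite Hz, IH; auto; [ring | intros ->; contradiction].
Qed.

Lemma sum_idx_ge_term f l k : (forall i, In i l -> 0 <= f i) -> In k l -> f k <= sum_idx f l.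
Proof.
  induction l as [|i l IH]; simpl; intros H Hk; [tauto|].
  assert (Hl : 0 <= sum_idx f l).
  { clear IH Hk. induction l as [|j l IH]; simpl; [lra|].
    assert (0 <= f j) by (apply H; simpl; auto).
    assert (0 <= sum_idx f l) by (apply IH; intros; apply H; simpl in *; tauto). lra. }
  destruct Hk as [->|Hk].
  - lra.
  - assert (0 <= f i) by auto. assert (f k <= sum_idx f l) by auto. lra.
Qed.

Lemma deg_le_sum_idx (F : nat -> R -> R) l d : (forall i, In i l -> deg_le (F i) d) ->
  deg_le (fun x => sum_idx (fun i => F i x) l) d.
Proof.
  induction l as [|i l IH]; simpl; intro H; [apply deg_le_const|].
  apply deg_le_add; [apply H | apply IH; intros; apply H]; simpl; auto.
Qed.

(** * The uniform average on [-1, 1] *)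

Definition unif (f : R -> R) : R := / 2 * RInt f (-1) 1.

Lemma unif_ext f g : (forall x, f x = g x) -> unif f = unif g.
Proof. intro H; unfold unif; f_equal; apply RInt_ext; auto. Qed.

Lemma unif_const c : unif (fun _ => c) = c.
Proof. unfold unif. rewrite RInt_const. unfold scal; simpl; unfold mult; simpl; field. Qed.

Lemma unif_plus f g : ex_RInt f (-1) 1 -> ex_RInt g (-1) 1 ->
  unif (fun x => f x + g x) = unif f + unif g.
Proof.
  intros Hf Hg; unfold unif.
  assert (E : RInt (fun x => f x + g x) (-1) 1 = RInt f (-1) 1 + RInt g (-1) 1)
    by exact (RInt_plus f g (-1) 1 Hf Hg).
  rewrite E; ring.
Qed.

Lemma unif_scal c f : ex_RInt f (-1) 1 -> unif (fun x => c * f x) = c * unif f.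
Proof.
  intros Hf; unfold unif.
  assert (E : RInt (fun x => c * f x) (-1) 1 = c * RInt f (-1) 1)
    by exact (RInt_scal f (-1) 1 c Hf).
  rewrite E; ring.
Qed.

Lemma unif_lin_comb a b f g : ex_RInt f (-1) 1 -> ex_RInt g (-1) 1 ->
  unif (fun x => a * f x + b * g x) = a * unif f + b * unif g.
Proof.
  intros Hf Hg. rewrite unif_plus, !unif_scal; auto; apply (ex_RInt_scal (V := R_CompleteNormedModule)); auto.
Qed.

Lemma unif_sum_idx (F : nat -> R -> R) l d : (forall i, In i l -> deg_le (F i) d) ->
  unif (fun x => sum_idx (fun i => F i x) l) = sum_idx (fun i => unif (F i)) l.
Proof.
  induction l as [|i l IH]; simpl; intro H; [apply unif_const|].
  rewrite unif_plus, IH.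
  - reflexivity.
  - intros; apply H; auto.
  - apply (deg_le_ex_RInt _ d), H; auto.
  - apply (deg_le_ex_RInt _ d), deg_le_sum_idx. intros; apply H; auto.
Qed.

Lemma unif_nonneg f d : deg_le f d -> (forall x, -1 < x < 1 -> 0 <= f x) -> 0 <= unif f.
Proof.
  intros Hf H. unfold unif. apply Rmult_le_pos; [lra|].
  apply RInt_ge_0; [lra | eapply deg_le_ex_RInt; eauto | auto].
Qed.

Lemma exists_left_interval_avoiding (zs : list R) :
  exists b, -1 < b <= 1 /\ forall y, In y zs -> -1 < y -> b <= y.
Proof.
  induction zs as [|z zs [b [Hb H]]]; simpl.
  - exists 1; split; [lra | tauto].
  - destruct (Rlt_dec (-1) z) as [Hz|Hz].
    + exists (Rmin z b); split.
      * split; [apply Rmin_glb_lt | eapply Rle_trans; [apply Rmin_r|]]; tauto.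
      * intros y [<-|Hy] Hy1; [apply Rmin_l | eapply Rle_trans; [apply Rmin_r | auto]].
    + exists b; split; auto. intros y [<-|Hy] Hy1; [contradiction | auto].
Qed.

Lemma unif_pos f d (zs : list R) : deg_le f d -> (forall x, 0 <= f x) ->
  (forall x, ~ In x zs -> 0 < f x) -> 0 < unif f.
Proof.
  intros Hf H0 Hpos. destruct (exists_left_interval_avoiding zs) as [b [Hb Hzs]].
  assert (E : plus (RInt f (-1) b) (RInt f b 1) = RInt f (-1) 1)
    by (apply RInt_Chasles; eapply deg_le_ex_RInt; eauto).
  assert (P1 : 0 < RInt f (-1) b).
  { apply RInt_gt_0; [lra | | intros; eapply deg_le_continuous; eauto].
    intros x Hx. apply Hpos. intro Hin. assert (b <= x) by (apply Hzs; auto; lra). lra. }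
  assert (P2 : 0 <= RInt f b 1).
  { apply RInt_ge_0; [lra | eapply deg_le_ex_RInt; eauto | auto]. }
  unfold unif. rewrite <- E. unfold plus; simpl. lra.
Qed.

Definition poly_linear (Phi : (R -> R) -> R) : Prop :=
  (forall f g, (forall x, f x = g x) -> Phi f = Phi g) /\
  (forall f g d, deg_le f d -> deg_le g d -> Phi (fun x => f x + g x) = Phi f + Phi g) /\
  (forall c f d, deg_le f d -> Phi (fun x => c * f x) = c * Phi f).

Lemma poly_linear_eq Phi Psi d f : poly_linear Phi -> poly_linear Psi ->
  (forall j, (j <= d)%nat -> Phi (fun x => x ^ j) = Psi (fun x => x ^ j)) ->
  deg_le f d -> Phi f = Psi f.
Proof.
  intros [Phi_ext [Phi_add Phi_scal]] [Psi_ext [Psi_add Psi_scal]] Hmon [cs [Hl Hf]].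
  rewrite (Phi_ext f (fun x => x ^ 0 * peval cs x)), (Psi_ext f (fun x => x ^ 0 * peval cs x))
    by (intro; rewrite Hf; simpl; ring).
  assert (Hx : forall j, (j + length cs <= S d)%nat ->
    Phi (fun x => x ^ j * peval cs x) = Psi (fun x => x ^ j * peval cs x)).
  2: apply Hx; simpl; lia.
  clear Hl Hf. induction cs as [|c cs IH]; intros j Hj; simpl in Hj.
  - rewrite (Phi_ext _ (fun x => 0 * x ^ 0)), (Psi_ext _ (fun x => 0 * x ^ 0))
      by (intro; simpl; ring).
    rewrite (Phi_scal _ _ 0%nat), (Psi_scal _ _ 0%nat) by apply deg_le_pow. ring.
  - set (g := fun x => x ^ S j * peval cs x).
    assert (Hg : deg_le g (S j + length cs)).
    { apply deg_le_mul; [apply deg_le_pow | exists cs; split; auto]. }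
    assert (Hp : deg_le (fun x => x ^ j) (S j + length cs))
      by (apply deg_le_mono with j; [lia | apply deg_le_pow]).
    rewrite (Phi_ext _ (fun x => c * x ^ j + g x)), (Psi_ext _ (fun x => c * x ^ j + g x))
      by (intro; unfold g; simpl; ring).
    rewrite (Phi_add _ _ (S j + length cs)%nat), (Psi_add _ _ (S j + length cs)%nat),
      (Phi_scal _ _ j), (Psi_scal _ _ j), Hmon; auto using deg_le_scal, deg_le_pow; try lia.
    unfold g; rewrite IH by lia. reflexivity.
Qed.

Lemma weighted_unif_poly_linear w e : deg_le w e -> poly_linear (fun f => unif (fun x => w x * f x)).
Proof.
  intro Hw. split; [|split].
  - intros f g H. apply unif_ext; intro; rewrite H; auto.
  - intros f g d Hf Hg.
    rewrite <- unif_plus by (apply (deg_le_ex_RInt _ (e + d)), deg_le_mul; auto).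
    apply unif_ext; intro; ring.
  - intros c f d Hf.
    rewrite <- unif_scal by (apply (deg_le_ex_RInt _ (e + d)), deg_le_mul; auto).
    apply unif_ext; intro; ring.
Qed.

Lemma unif_poly_linear : poly_linear unif.
Proof.
  split; [|split].
  - apply unif_ext.
  - intros f g d Hf Hg. apply unif_plus; eapply deg_le_ex_RInt; eauto.
  - intros c f d Hf. apply unif_scal; eapply deg_le_ex_RInt; eauto.
Qed.

(** * Legendre polynomials *)

Lemma nat_ind2 (P : nat -> Prop) : P 0%nat -> P 1%nat ->
  (forall k, P k -> P (S k) -> P (S (S k))) -> forall k, P k.
Proof.
  intros H0 H1 HS k. enough (P k /\ P (S k)) by tauto.
  induction k as [|k IH]; split; try tauto. apply HS; tauto.
Qed.

Lemma legendre_0 x : legendre 0 x = 1.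
Proof. reflexivity. Qed.

Lemma legendre_1 x : legendre 1 x = x.
Proof. reflexivity. Qed.

Lemma legendre_SS k x : legendre (S (S k)) x =
  ((2 * INR k + 3) * x * legendre (S k) x - (INR k + 1) * legendre k x) / (INR k + 2).
Proof.
  unfold legendre; simpl. destruct (legendre_pair k x) as [p q]; reflexivity.
Qed.

Lemma legendre_SS_lin k x : legendre (S (S k)) x =
  (2 * INR k + 3) / (INR k + 2) * (x * legendre (S k) x)
  - (INR k + 1) / (INR k + 2) * legendre k x.
Proof. rewrite legendre_SS. field. pose proof (pos_INR k); lra. Qed.

Lemma deg_le_legendre k : deg_le (legendre k) k.
Proof.
  induction k as [| |k IH0 IH1] using nat_ind2.
  - exact (deg_le_const 1 0).
  - exact deg_le_id.
  - apply deg_le_ext with (fun x => (2 * INR k + 3) / (INR k + 2) * (x * legendre (S k) x)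
       - (INR k + 1) / (INR k + 2) * legendre k x); [intro; symmetry; apply legendre_SS_lin|].
    apply deg_le_sub; apply deg_le_scal; [now apply deg_le_mul_id|].
    apply deg_le_mono with k; auto.
Qed.

Lemma legendre_at_1 k : legendre k 1 = 1.
Proof.
  induction k as [| |k IH0 IH1] using nat_ind2; try reflexivity.
  rewrite legendre_SS, IH0, IH1. field. pose proof (pos_INR k); lra.
Qed.

Lemma legendre_opp k x : legendre k (- x) = (-1) ^ k * legendre k x.
Proof.
  induction k as [| |k IH0 IH1] using nat_ind2.
  { rewrite !legendre_0; ring. }
  { rewrite !legendre_1; ring. }
  rewrite !legendre_SS, IH0, IH1. simpl. field. pose proof (pos_INR k); lra.
Qed.

Definition unif_pow_value (j : nat) : R := if Nat.even j then / (INR j + 1) else 0.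

Lemma unif_pow j : unif (fun x => x ^ j) = unif_pow_value j.
Proof.
  assert (Hder : forall x, Rmin (-1) 1 <= x <= Rmax (-1) 1 ->
     is_derive (fun x => / INR (S j) * x ^ S j) x (x ^ j)).
  { intros x _.
    assert (H := is_derive_scal (fun x => x ^ S j) x (/ INR (S j)) _
                  (is_derive_pow (fun y => y) (S j) x 1 (is_derive_id x))).
    replace (x ^ j) with (/ INR (S j) * (INR (S j) * 1 * x ^ Init.Nat.pred (S j))); auto.
    simpl pred. field. apply not_0_INR; lia. }
  assert (Hcont : forall x, Rmin (-1) 1 <= x <= Rmax (-1) 1 -> continuous (fun x => x ^ j) x)
    by (intros; eapply deg_le_continuous, deg_le_pow).
  assert (E : RInt (fun x => x ^ j) (-1) 1 = / INR (S j) * 1 ^ S j - / INR (S j) * (-1) ^ S j)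
    by exact (is_RInt_unique _ _ _ _ (is_RInt_derive _ _ _ _ Hder Hcont)).
  unfold unif, unif_pow_value. rewrite E, pow1, S_INR.
  destruct (Nat.Even_or_Odd j) as [[m ->]|[m ->]].
  - rewrite Nat.even_mul, pow_1_odd. cbn [Nat.even orb]. field. pose proof (pos_INR (2 * m)); lra.
  - replace (2 * m + 1)%nat with (S (2 * m)) by lia.
    rewrite Nat.even_succ, Nat.odd_mul. replace (S (S (2 * m))) with (2 * S m)%nat by lia.
    rewrite pow_1_even. cbn [Nat.even Nat.odd negb andb]. field. pose proof (pos_INR (S (2 * m))); lra.
Qed.

(* Orthogonality of [P_k] is obtained by computing all its moments: the three-term
   recurrence alone does not close on the relations [unif (P_k x^j) = 0], j < k. *)
Definition leg_mom_closed (k s : nat) : R :=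
  2 ^ k * INR (fact (k + 2 * s)) * INR (fact (k + s)) /
  (INR (fact s) * INR (fact (2 * k + 2 * s + 1))).

Definition leg_mom (k j : nat) : R :=
  if (j <? k)%nat then 0
  else if Nat.even (j - k) then leg_mom_closed k ((j - k) / 2) else 0.

Lemma leg_mom_lt k j : (j < k)%nat -> leg_mom k j = 0.
Proof. intro H; unfold leg_mom. apply Nat.ltb_lt in H; rewrite H; auto. Qed.

Lemma leg_mom_even k s : leg_mom k (k + 2 * s) = leg_mom_closed k s.
Proof.
  unfold leg_mom. replace (k + 2 * s <? k)%nat with false by (symmetry; apply Nat.ltb_ge; lia).
  replace (k + 2 * s - k)%nat with (s * 2)%nat by lia.
  rewrite Nat.even_mul, Nat.div_mul, Bool.orb_true_r; auto.
Qed.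

Lemma leg_mom_odd k s : leg_mom k (k + 2 * s + 1) = 0.
Proof.
  unfold leg_mom. replace (k + 2 * s + 1 <? k)%nat with false by (symmetry; apply Nat.ltb_ge; lia).
  replace (k + 2 * s + 1 - k)%nat with (S (2 * s)) by lia.
  rewrite Nat.even_succ, Nat.odd_mul; auto.
Qed.

Lemma leg_mom_cases k j : (j < k)%nat \/ exists s, j = (k + 2 * s)%nat \/ j = (k + 2 * s + 1)%nat.
Proof.
  destruct (Nat.lt_ge_cases j k) as [H|H]; [left; auto | right].
  destruct (Nat.Even_or_Odd (j - k)) as [[s Hs]|[s Hs]]; exists s; lia.
Qed.

Lemma INR_fact_S m : INR (fact (S m)) = INR (S m) * INR (fact m).
Proof. change (fact (S m)) with (S m * fact m)%nat. apply mult_INR. Qed.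


Ltac INR_simpl := repeat rewrite ?plus_INR, ?mult_INR, ?S_INR, ?INR_0.

Lemma leg_mom_0 j : leg_mom 0 j = unif_pow_value j.
Proof.
  destruct (leg_mom_cases 0 j) as [H|[s [-> | ->]]]; [lia| |].
  - rewrite leg_mom_even. unfold leg_mom_closed, unif_pow_value.
    replace (2 * 0 + 2 * s + 1)%nat with (S (2 * s)) by lia.
    rewrite !Nat.add_0_l, Nat.even_mul, INR_fact_S, S_INR, pow_O. cbn [Nat.even orb].
    pose proof (INR_fact_neq_0 s); pose proof (INR_fact_neq_0 (2 * s)); pose proof (pos_INR (2 * s)).
    field; repeat split; auto; lra.
  - rewrite leg_mom_odd. unfold unif_pow_value.
    replace (0 + 2 * s + 1)%nat with (S (2 * s)) by lia.
    rewrite Nat.even_succ, Nat.odd_mul; auto.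
Qed.

Lemma leg_mom_1 j : leg_mom 1 j = unif_pow_value (S j).
Proof.
  destruct (leg_mom_cases 1 j) as [H|[s [-> | ->]]].
  - rewrite leg_mom_lt by auto. replace j with 0%nat by lia. reflexivity.
  - rewrite leg_mom_even. unfold leg_mom_closed, unif_pow_value.
    replace (S (1 + 2 * s)) with (2 * S s)%nat by lia.
    replace (2 * 1 + 2 * s + 1)%nat with (S (S (S (2 * s)))) by lia.
    replace (1 + 2 * s)%nat with (S (2 * s)) by lia.
    replace (1 + s)%nat with (S s) by lia.
    rewrite Nat.even_mul, !INR_fact_S. cbn [Nat.even orb].
    pose proof (INR_fact_neq_0 s); pose proof (INR_fact_neq_0 (2 * s)).
    INR_simpl. pose proof (pos_INR s).
    field; repeat split; auto; lra.
  - rewrite leg_mom_odd. unfold unif_pow_value.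
    replace (S (1 + 2 * s + 1)) with (S (2 * S s)) by lia.
    rewrite Nat.even_succ, Nat.odd_mul; auto.
Qed.

Lemma leg_mom_closed_rec0 k :
  (2 * INR k + 3) * leg_mom_closed (S k) 0 = (INR k + 1) * leg_mom_closed k 0.
Proof.
  unfold leg_mom_closed. rewrite !Nat.mul_0_r, !Nat.add_0_r.
  replace (2 * S k + 1)%nat with (S (S (2 * k + 1))) by lia.
  rewrite !INR_fact_S. change (fact 0) with 1%nat. change (2 ^ S k) with (2 * 2 ^ k).
  pose proof (INR_fact_neq_0 k); pose proof (INR_fact_neq_0 (2 * k + 1)).
  INR_simpl. pose proof (pos_INR k).
  field; repeat split; auto; lra.
Qed.

Lemma leg_mom_closed_rec k s :
  (INR k + 2) * leg_mom_closed (S (S k)) s =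
  (2 * INR k + 3) * leg_mom_closed (S k) (S s) - (INR k + 1) * leg_mom_closed k (S s).
Proof.
  unfold leg_mom_closed.
  replace (S (S k) + 2 * s)%nat with (S (S (k + 2 * s))) by lia.
  replace (S k + 2 * S s)%nat with (S (S (S (k + 2 * s)))) by lia.
  replace (k + 2 * S s)%nat with (S (S (k + 2 * s))) by lia.
  replace (S (S k) + s)%nat with (S (S (k + s))) by lia.
  replace (S k + S s)%nat with (S (S (k + s))) by lia.
  replace (k + S s)%nat with (S (k + s)) by lia.
  replace (2 * S (S k) + 2 * s + 1)%nat with (S (S (S (S (2 * k + 2 * s + 1))))) by lia.
  replace (2 * S k + 2 * S s + 1)%nat with (S (S (S (S (2 * k + 2 * s + 1))))) by lia.
  replace (2 * k + 2 * S s + 1)%nat with (S (S (2 * k + 2 * s + 1))) by lia.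
  rewrite !INR_fact_S.
  change (2 ^ S (S k)) with (2 * (2 * 2 ^ k)). change (2 ^ S k) with (2 * 2 ^ k).
  pose proof (INR_fact_neq_0 s); pose proof (INR_fact_neq_0 (k + s)).
  pose proof (INR_fact_neq_0 (k + 2 * s)); pose proof (INR_fact_neq_0 (2 * k + 2 * s + 1)).
  INR_simpl. pose proof (pos_INR k); pose proof (pos_INR s).
  field; repeat split; auto; lra.
Qed.

Lemma leg_mom_rec k j : (INR k + 2) * leg_mom (S (S k)) j =
  (2 * INR k + 3) * leg_mom (S k) (S j) - (INR k + 1) * leg_mom k j.
Proof.
  destruct (leg_mom_cases k j) as [H|[s [-> | ->]]].
  - rewrite !leg_mom_lt by lia. ring.
  - destruct s as [|s].
    + rewrite leg_mom_lt by lia. replace (S (k + 2 * 0)) with (S k + 2 * 0)%nat by lia.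
      rewrite !leg_mom_even, leg_mom_closed_rec0. ring.
    + replace (k + 2 * S s)%nat with (S (S k) + 2 * s)%nat by lia.
      rewrite leg_mom_even.
      replace (S (S (S k) + 2 * s)) with (S k + 2 * S s)%nat by lia.
      replace (S (S k) + 2 * s)%nat with (k + 2 * S s)%nat by lia.
      rewrite !leg_mom_even. apply leg_mom_closed_rec.
  - replace (S (k + 2 * s + 1)) with (S k + 2 * s + 1)%nat by lia.
    rewrite !leg_mom_odd. destruct s as [|s].
    + rewrite leg_mom_lt by lia. ring.
    + replace (k + 2 * S s + 1)%nat with (S (S k) + 2 * s + 1)%nat by lia.
      rewrite leg_mom_odd. ring.
Qed.

Lemma ex_RInt_legendre_pow k j a b : ex_RInt (fun x => legendre k x * x ^ j) a b.
Proof. apply (deg_le_ex_RInt _ (k + j)), deg_le_mul; [apply deg_le_legendre | apply deg_le_pow]. Qed.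

Lemma legendre_moment k j : unif (fun x => legendre k x * x ^ j) = leg_mom k j.
Proof.
  revert j; induction k as [| |k IH0 IH1] using nat_ind2; intro j.
  - rewrite leg_mom_0, <- unif_pow. apply unif_ext; intro; rewrite legendre_0; ring.
  - rewrite leg_mom_1, <- unif_pow. apply unif_ext; intro; rewrite legendre_1; simpl; ring.
  - assert (Hk : INR k + 2 <> 0) by (pose proof (pos_INR k); lra).
    apply Rmult_eq_reg_l with (INR k + 2); auto. rewrite leg_mom_rec, <- IH0, <- IH1.
    rewrite (unif_ext _ (fun x => (2 * INR k + 3) / (INR k + 2) * (legendre (S k) x * x ^ S j)
                       + - ((INR k + 1) / (INR k + 2)) * (legendre k x * x ^ j)))
      by (intro; rewrite legendre_SS_lin; simpl; ring).
    rewrite unif_lin_comb by apply ex_RInt_legendre_pow.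
    field; auto.
Qed.

Lemma legendre_orth k q d : deg_le q d -> (d < k)%nat -> unif (fun x => legendre k x * q x) = 0.
Proof.
  intros Hq Hd.
  apply (poly_linear_eq (fun f => unif (fun x => legendre k x * f x)) (fun _ => 0) d); auto.
  - apply weighted_unif_poly_linear with k, deg_le_legendre.
  - split; [|split]; intros; ring.
  - intros j Hj. rewrite legendre_moment. apply leg_mom_lt; lia.
Qed.

(** * Finitely supported measures *)

Definition fint (eta : fmeasure) (f : R -> R) : R :=
  fold_right (fun p acc => snd p * f (fst p) + acc) 0 eta.

Lemma total_mass_fint eta : total_mass eta = fint eta (fun _ => 1).
Proof. induction eta as [|p eta IH]; simpl; [|rewrite IH]; ring. Qed.

Lemma fint_scal eta c f : fint eta (fun x => c * f x) = c * fint eta f.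
Proof. induction eta as [|p eta IH]; simpl; [|rewrite IH]; ring. Qed.

Lemma fint_poly_linear eta : poly_linear (fint eta).
Proof.
  split; [|split]; [intros f g H | intros f g d _ _ | intros c f d _].
  - induction eta as [|p eta IH]; simpl; [|rewrite H, IH]; reflexivity.
  - induction eta as [|p eta IH]; simpl; [|rewrite IH]; ring.
  - apply fint_scal.
Qed.

Lemma fint_le eta f g : (forall p, In p eta -> 0 <= snd p) ->
  (forall p, In p eta -> f (fst p) <= g (fst p)) -> fint eta f <= fint eta g.
Proof.
  induction eta as [|p eta IH]; simpl; intros Hm Hfg; [lra|].
  apply Rplus_le_compat; [apply Rmult_le_compat_l; auto | auto].
Qed.

Lemma fint_eq_unif n eta f : in_Xi n eta -> deg_le f n -> fint eta f = unif f.
Proof.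
  intros [_ [_ [_ Hmom]]] Hf.
  apply (poly_linear_eq _ _ n); auto using fint_poly_linear, unif_poly_linear.
Qed.

Lemma u_nonneg eta : 0 <= u eta.
Proof. induction eta as [|p eta IH]; simpl; [lra | eapply Rle_trans; [|apply Rmax_r]; auto]. Qed.

Lemma u_ge_atom eta p : In p eta -> Rabs (fst p) <= u eta.
Proof.
  induction eta as [|q eta IH]; simpl; [tauto|].
  intros [->|H]; [apply Rmax_l | eapply Rle_trans; [|apply Rmax_r]; auto].
Qed.

Lemma u_le eta M : 0 <= M -> (forall p, In p eta -> Rabs (fst p) <= M) -> u eta <= M.
Proof.
  induction eta as [|q eta IH]; simpl; intros HM H; auto.
  apply Rmax_lub; auto.
Qed.

(** * Lagrange interpolation *)

(* [lagrange xs i] is [lagrange_on xs i (seq 0 (length xs))]; the index list is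
   generalized for induction. *)
Definition lagrange_on (xs : list R) (i : nat) (l : list nat) (x : R) : R :=
  fold_right
    (fun j acc => if Nat.eqb j i then acc
       else (x - nth j xs 0) / (nth i xs 0 - nth j xs 0) * acc) 1 l.

Lemma lagrange_on_cons xs i j l x : lagrange_on xs i (j :: l) x =
  if Nat.eqb j i then lagrange_on xs i l x
  else (x - nth j xs 0) / (nth i xs 0 - nth j xs 0) * lagrange_on xs i l x.
Proof. reflexivity. Qed.

Lemma deg_le_lagrange_factor a b : deg_le (fun x => (x - a) / b) 1.
Proof.
  apply deg_le_ext with (fun x => / b * x + - a / b); [intros; unfold Rdiv; ring | apply deg_le_linear].
Qed.

Lemma deg_le_lagrange_on_notin xs i l : ~ In i l -> deg_le (lagrange_on xs i l) (length l).
Proof.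
  induction l as [|j l IH]; intros Hi; [apply deg_le_const|].
  apply deg_le_ext with (fun x => (x - nth j xs 0) / (nth i xs 0 - nth j xs 0) * lagrange_on xs i l x).
  { intro x; rewrite lagrange_on_cons. destruct (Nat.eqb_spec j i); [subst; simpl in Hi; tauto | auto]. }
  apply (deg_le_mul _ _ 1); [apply deg_le_lagrange_factor | apply IH; simpl in Hi; tauto].
Qed.

Lemma deg_le_lagrange_on xs i l : NoDup l -> In i l -> deg_le (lagrange_on xs i l) (pred (length l)).
Proof.
  induction l as [|j l IH]; intros Hnd Hi; [destruct Hi|].
  inversion Hnd as [|? ? Hj Hnd']; subst.
  destruct (Nat.eqb_spec j i) as [<-|Hji].
  - apply deg_le_ext with (lagrange_on xs j l); [intro; rewrite lagrange_on_cons, Nat.eqb_refl; auto|].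
    now apply deg_le_lagrange_on_notin.
  - destruct Hi as [->|Hi]; [tauto|].
    destruct l as [|j' l]; [destruct Hi|].
    apply deg_le_ext with (fun x => (x - nth j xs 0) / (nth i xs 0 - nth j xs 0) * lagrange_on xs i (j' :: l) x).
    { intro x; rewrite (lagrange_on_cons _ _ j). apply Nat.eqb_neq in Hji; rewrite Hji; auto. }
    apply (deg_le_mul _ _ 1); [apply deg_le_lagrange_factor | apply IH; auto].
Qed.

Lemma lagrange_on_other xs i l k : In k l -> k <> i -> lagrange_on xs i l (nth k xs 0) = 0.
Proof.
  induction l as [|j l IH]; intros Hk Hki; [destruct Hk|]. rewrite lagrange_on_cons.
  destruct (Nat.eqb_spec j i) as [<-|Hji]; destruct Hk as [->|Hk]; try tauto.
  - unfold Rdiv; ring.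
  - rewrite IH; auto; ring.
Qed.

Lemma lagrange_on_neq0 xs i l x :
  (forall j, In j l -> j <> i -> nth i xs 0 <> nth j xs 0 /\ x <> nth j xs 0) ->
  lagrange_on xs i l x <> 0.
Proof.
  induction l as [|j l IH]; intros H; simpl; [lra|].
  destruct (Nat.eqb_spec j i) as [->|Hji]; [apply IH; intros; apply H; simpl; auto|].
  destruct (H j (or_introl eq_refl) Hji) as [Hi Hx].
  apply Rmult_integral_contrapositive; split; [|apply IH; intros; apply H; simpl; auto].
  unfold Rdiv; apply Rmult_integral_contrapositive; split.
  - lra.
  - apply Rinv_neq_0_compat; lra.
Qed.

Lemma lagrange_on_self xs i l :
  (forall j, In j l -> j <> i -> nth i xs 0 <> nth j xs 0) -> lagrange_on xs i l (nth i xs 0) = 1.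
Proof.
  induction l as [|j l IH]; intros H; simpl; auto.
  destruct (Nat.eqb_spec j i) as [->|Hji]; [apply IH; intros; apply H; simpl; auto|].
  rewrite IH by (intros; apply H; simpl; auto).
  field. intro E. apply (H j); simpl; auto. lra.
Qed.

(** * Gauss-Legendre quadrature *)

Section GaussLegendre.

Variables (r : nat) (xs : list R).
Hypothesis r_pos : (0 < r)%nat.
Hypothesis xs_length : length xs = r.
Hypothesis xs_sorted : forall i j : nat, (i < j < length xs)%nat -> nth i xs 0 < nth j xs 0.
Hypothesis xs_zeros : forall x : R, legendre r x = 0 <-> In x xs.

Lemma nodes_inj i j : (i < r)%nat -> (j < r)%nat -> nth i xs 0 = nth j xs 0 -> i = j.
Proof.
  intros Hi Hj E. destruct (Nat.lt_total i j) as [H|[H|H]]; auto.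
  - assert (nth i xs 0 < nth j xs 0) by (apply xs_sorted; lia). lra.
  - assert (nth j xs 0 < nth i xs 0) by (apply xs_sorted; lia). lra.
Qed.

Lemma nodes_NoDup : NoDup xs.
Proof.
  apply (NoDup_nth xs 0). rewrite xs_length. intros i j Hi Hj E. now apply nodes_inj.
Qed.

Lemma In_node_nth x : In x xs -> exists k, (k < r)%nat /\ x = nth k xs 0.
Proof. intro H. destruct (In_nth xs x 0 H) as [k [Hk <-]]. exists k; split; auto; lia. Qed.

Lemma nth_node_In k : (k < r)%nat -> In (nth k xs 0) xs.
Proof. intro; apply nth_In; lia. Qed.

Lemma legendre_node_poly : exists c, c <> 0 /\ forall x, legendre r x = c * node_poly xs x.
Proof.
  destruct (factor_node_poly xs (legendre r) 0 nodes_NoDup) as [g [Hg Eg]].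
  - intros a Ha; apply xs_zeros; auto.
  - rewrite xs_length, Nat.add_0_r. apply deg_le_legendre.
  - exists (g 0); split.
    + intro E. assert (H1 := legendre_at_1 r). rewrite Eg, (deg_le_0_const g Hg), E in H1. lra.
    + intro x. rewrite Eg, (deg_le_0_const g Hg x). ring.
Qed.

Lemma node_poly_orth q d : deg_le q d -> (d < r)%nat -> unif (fun x => node_poly xs x * q x) = 0.
Proof.
  intros Hq Hd. destruct legendre_node_poly as [c [Hc Ec]].
  rewrite (unif_ext _ (fun x => / c * (legendre r x * q x))) by (intro; rewrite Ec; field; auto).
  rewrite unif_scal, (legendre_orth r q d); auto; [ring|].
  apply (deg_le_ex_RInt _ (r + d)), deg_le_mul; auto using deg_le_legendre.
Qed.

Lemma deg_le_lagrange i : (i < r)%nat -> deg_le (lagrange xs i) (r - 1).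
Proof.
  intro Hi. replace (r - 1)%nat with (pred (length (seq 0 (length xs)))) by (rewrite length_seq; lia).
  apply deg_le_lagrange_on; [apply seq_NoDup | apply in_seq; lia].
Qed.

Lemma lagrange_node_other i k : (k < r)%nat -> k <> i -> lagrange xs i (nth k xs 0) = 0.
Proof. intros Hk Hki. apply lagrange_on_other; auto. apply in_seq; lia. Qed.

Lemma lagrange_node_self i : (i < r)%nat -> lagrange xs i (nth i xs 0) = 1.
Proof.
  intro Hi. apply lagrange_on_self. intros j Hj Hji E. apply in_seq in Hj.
  apply Hji, (nodes_inj j i); auto; lia.
Qed.

Lemma lagrange_neq0 i x : (i < r)%nat -> ~ In x xs -> lagrange xs i x <> 0.
Proof.
  intros Hi Hx. apply lagrange_on_neq0. intros j Hj Hji. apply in_seq in Hj. split.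
  - intro E. apply Hji, (nodes_inj j i); auto; lia.
  - intros ->. apply Hx, nth_node_In; lia.
Qed.

Theorem gauss_quadrature f d : deg_le f d -> (d < 2 * r)%nat ->
  unif f = sum_idx (fun i => gl_weight xs i * f (nth i xs 0)) (seq 0 r).
Proof.
  intros Hf Hd.
  set (s := fun x => sum_idx (fun i => f (nth i xs 0) * lagrange xs i x) (seq 0 r)).
  assert (Hlag : forall i, In i (seq 0 r) -> deg_le (fun x => f (nth i xs 0) * lagrange xs i x) (r - 1))
    by (intros i Hi; apply in_seq in Hi; apply deg_le_scal, deg_le_lagrange; lia).
  assert (Hs : deg_le s (r - 1)) by now apply deg_le_sum_idx.
  assert (Hinterp : forall k, (k < r)%nat -> s (nth k xs 0) = f (nth k xs 0)).
  { intros k Hk. unfold s. rewrite (sum_idx_unique _ _ k).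
    - rewrite lagrange_node_self; auto; ring.
    - apply seq_NoDup.
    - apply in_seq; lia.
    - intros i Hi Hik. apply in_seq in Hi. rewrite lagrange_node_other; auto; ring. }
  destruct (factor_node_poly xs (fun x => f x - s x) (r - 1) nodes_NoDup) as [g [Hg Eg]].
  - intros a Ha. destruct (In_node_nth a Ha) as [k [Hk ->]]. rewrite Hinterp; auto; ring.
  - rewrite xs_length.
    apply deg_le_sub; [apply deg_le_mono with d | apply deg_le_mono with (r - 1)%nat]; auto; lia.
  - rewrite (unif_ext f (fun x => 1 * s x + 1 * (node_poly xs x * g x))) by (intro; rewrite <- Eg; ring).
    rewrite unif_lin_comb, (node_poly_orth g (r - 1)) by
      (auto; try lia; eapply deg_le_ex_RInt; eauto using deg_le_mul, deg_le_node_poly).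
    unfold s. rewrite (unif_sum_idx _ _ (r - 1)) by auto.
    rewrite Rmult_1_l, Rmult_0_r, Rplus_0_r.
    apply sum_idx_ext. intros i Hi. apply in_seq in Hi.
    rewrite unif_scal by (eapply deg_le_ex_RInt, deg_le_lagrange; lia).
    change (gl_weight xs i) with (unif (lagrange xs i)); ring.
Qed.

Lemma gauss_single f d i : deg_le f d -> (d < 2 * r)%nat -> (i < r)%nat ->
  (forall k, (k < r)%nat -> k <> i -> f (nth k xs 0) = 0) ->
  unif f = gl_weight xs i * f (nth i xs 0).
Proof.
  intros Hf Hd Hi Hz. rewrite (gauss_quadrature f d) by auto.
  apply (sum_idx_unique (fun i => gl_weight xs i * f (nth i xs 0)));
    [apply seq_NoDup | apply in_seq; lia |].
  intros k Hk Hki. apply in_seq in Hk. rewrite Hz by (auto; lia). ring.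
Qed.

Lemma deg_le_lagrange_sq i : (i < r)%nat ->
  deg_le (fun x => lagrange xs i x * lagrange xs i x) (2 * r - 2).
Proof.
  intro Hi. replace (2 * r - 2)%nat with (r - 1 + (r - 1))%nat by lia.
  apply deg_le_mul; apply deg_le_lagrange; auto.
Qed.

Lemma gl_weight_sq i : (i < r)%nat -> gl_weight xs i = unif (fun x => lagrange xs i x * lagrange xs i x).
Proof.
  intro Hi. rewrite (gauss_single _ (2 * r - 2) i); auto using deg_le_lagrange_sq; try lia.
  - rewrite lagrange_node_self; auto; ring.
  - intros k Hk Hki. rewrite lagrange_node_other; auto; ring.
Qed.

Lemma gl_weight_pos i : (i < r)%nat -> 0 < gl_weight xs i.
Proof.
  intro Hi. rewrite gl_weight_sq by auto.
  apply (unif_pos _ (2 * r - 2) xs); auto using deg_le_lagrange_sq.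
  - intro x. apply Rle_0_sqr.
  - intros x Hx. apply Rsqr_pos_lt, lagrange_neq0; auto.
Qed.

Lemma node_bounds i : (i < r)%nat -> -1 <= nth i xs 0 <= 1.
Proof.
  intro Hi. assert (Hw := gl_weight_pos i Hi).
  assert (side : forall a, -1 <= a <= 1 -> 0 <= gl_weight xs i * (1 + a * nth i xs 0)).
  { intros a Ha. set (f := fun x => (1 + a * x) * (lagrange xs i x * lagrange xs i x)).
    assert (Hf : deg_le f (2 * r - 1)).
    { replace (2 * r - 1)%nat with (1 + (2 * r - 2))%nat by lia.
      apply deg_le_mul; [|now apply deg_le_lagrange_sq].
      apply deg_le_ext with (fun x => a * x + 1); [intro; ring | apply deg_le_linear]. }
    replace (gl_weight xs i * (1 + a * nth i xs 0)) with (unif f).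
    - apply (unif_nonneg _ _ Hf). intros x Hx. apply Rmult_le_pos; [nra | apply Rle_0_sqr].
    - rewrite (gauss_single f (2 * r - 1) i); auto; try lia.
      + unfold f. rewrite lagrange_node_self; auto; ring.
      + intros k Hk Hki. unfold f. rewrite lagrange_node_other; auto; ring. }
  assert (H1 := side 1 ltac:(lra)). assert (H2 := side (-1) ltac:(lra)).
  split; nra.
Qed.

Lemma nodes_le i j : (i <= j < r)%nat -> nth i xs 0 <= nth j xs 0.
Proof.
  intro H. destruct (Nat.eq_dec i j) as [->|Hij]; [lra|].
  left; apply xs_sorted; lia.
Qed.

Lemma last_node_opp : nth (r - 1) xs 0 = - nth 0 xs 0.
Proof.
  assert (Hopp : forall k, (k < r)%nat -> In (- nth k xs 0) xs).
  { intros k Hk. apply xs_zeros. rewrite legendre_opp, (proj2 (xs_zeros _) (nth_node_In k Hk)). ring. }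
  assert (Hrange : forall y, In y xs -> nth 0 xs 0 <= y <= nth (r - 1) xs 0).
  { intros y Hy. destruct (In_node_nth y Hy) as [k [Hk ->]]. split; apply nodes_le; lia. }
  destruct (Hrange _ (Hopp 0%nat r_pos)). destruct (Hrange _ (Hopp (r - 1)%nat ltac:(lia))). lra.
Qed.

Lemma node_abs_le_first k : (k < r)%nat -> Rabs (nth k xs 0) <= Rabs (nth 0 xs 0).
Proof.
  intro Hk. assert (H0 := nodes_le 0 k ltac:(lia)). assert (H1 := nodes_le k (r - 1) ltac:(lia)).
  rewrite last_node_opp in H1. rewrite (Rabs_left1 (nth 0 xs 0)) by lra. apply Rabs_le; lra.
Qed.

Lemma fint_gl_measure f :
  fint (gl_measure xs) f = sum_idx (fun i => gl_weight xs i * f (nth i xs 0)) (seq 0 r).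
Proof.
  unfold gl_measure. rewrite xs_length. induction (seq 0 r) as [|i l IH]; simpl; auto.
  rewrite IH; auto.
Qed.

Lemma in_gl_measure p : In p (gl_measure xs) ->
  exists i, (i < r)%nat /\ p = (nth i xs 0, gl_weight xs i).
Proof.
  unfold gl_measure. rewrite in_map_iff. intros [i [<- Hi]]. apply in_seq in Hi.
  exists i; split; auto; lia.
Qed.

Lemma gl_measure_in_Xi n : (n < 2 * r)%nat -> in_Xi n (gl_measure xs).
Proof.
  intro Hn. split; [|split; [|split]].
  - unfold gl_measure. rewrite map_map. apply NoDup_map_NoDup_ForallPairs; [|apply seq_NoDup].
    intros i j Hi Hj. apply in_seq in Hi, Hj. apply nodes_inj; lia.
  - intros p Hp. destruct (in_gl_measure p Hp) as [i [Hi ->]].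
    split; [apply node_bounds | apply gl_weight_pos]; auto.
  - rewrite total_mass_fint, fint_gl_measure, <- (gauss_quadrature (fun _ => 1) 0); auto using deg_le_const; [|lia].
    apply unif_const.
  - intros l Hl. change (moment (gl_measure xs) l) with (fint (gl_measure xs) (fun x => x ^ l)).
    rewrite fint_gl_measure, <- (gauss_quadrature (fun x => x ^ l) l); auto using deg_le_pow; lia.
Qed.

Lemma u_gl_measure : u (gl_measure xs) = Rabs (nth 0 xs 0).
Proof.
  apply Rle_antisym.
  - apply u_le; [apply Rabs_pos|]. intros p Hp. destruct (in_gl_measure p Hp) as [i [Hi ->]].
    now apply node_abs_le_first.
  - apply (u_ge_atom _ (nth 0 xs 0, gl_weight xs 0)). unfold gl_measure.
    apply in_map_iff. exists 0%nat; split; auto. apply in_seq; lia.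
Qed.

Lemma exists_interior_node_poly : (2 <= r)%nat -> exists Q, deg_le Q (r - 2) /\
  Q (nth 0 xs 0) <> 0 /\ forall k, (0 < k < r - 1)%nat -> Q (nth k xs 0) = 0.
Proof.
  intro Hr. set (mid := map (fun i => nth i xs 0) (seq 1 (r - 2))).
  exists (node_poly mid); split; [|split].
  - replace (r - 2)%nat with (length mid) by (unfold mid; rewrite length_map, length_seq; auto).
    apply deg_le_node_poly.
  - apply node_poly_neq0. unfold mid. rewrite in_map_iff. intros [i [Ei Hi]]. apply in_seq in Hi.
    assert (i = 0%nat) by (apply nodes_inj; auto; lia). lia.
  - intros k Hk. apply node_poly_root. unfold mid. apply in_map_iff.
    exists k; split; auto. apply in_seq; lia.
Qed.

Lemma unif_sq_pos Q d k : deg_le Q d -> (d < r)%nat -> (k < r)%nat -> Q (nth k xs 0) <> 0 ->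
  0 < unif (fun x => Q x * Q x).
Proof.
  intros HQ Hd Hk HQk. rewrite (gauss_quadrature _ (d + d)) by (auto using deg_le_mul; lia).
  apply Rlt_le_trans with (gl_weight xs k * (Q (nth k xs 0) * Q (nth k xs 0))).
  - apply Rmult_lt_0_compat; [now apply gl_weight_pos | now apply Rsqr_pos_lt].
  - apply (sum_idx_ge_term (fun i => gl_weight xs i * (Q (nth i xs 0) * Q (nth i xs 0))));
      [|apply in_seq; lia].
    intros i Hi. apply in_seq in Hi.
    apply Rmult_le_pos; [left; apply gl_weight_pos; lia | apply Rle_0_sqr].
Qed.

(* At every node either [Q] vanishes or the node is [+/- nth 0 xs 0], so quadrature
   does not distinguish [x^2 Q^2] from [(nth 0 xs 0)^2 Q^2]. *)
Lemma unif_sq_interior_node_poly Q : (2 <= r)%nat -> deg_le Q (r - 2) ->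
  (forall k, (0 < k < r - 1)%nat -> Q (nth k xs 0) = 0) ->
  unif (fun x => x * x * (Q x * Q x)) = nth 0 xs 0 * nth 0 xs 0 * unif (fun x => Q x * Q x).
Proof.
  intros Hr HQ HQk. set (x0 := nth 0 xs 0).
  assert (HQ2 : deg_le (fun x => Q x * Q x) (r - 2 + (r - 2))) by auto using deg_le_mul.
  assert (Hp : deg_le (fun x => (x * x - x0 * x0) * (Q x * Q x)) (2 + (r - 2 + (r - 2)))).
  { apply deg_le_mul; auto. apply deg_le_sub; [|apply deg_le_const].
    apply (deg_le_mul _ _ 1 1); apply deg_le_id. }
  rewrite (unif_ext _ (fun x => 1 * ((x * x - x0 * x0) * (Q x * Q x)) + (x0 * x0) * (Q x * Q x)))
    by (intro; ring).
  rewrite unif_lin_comb by (eapply deg_le_ex_RInt; eauto).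
  rewrite (gauss_single _ _ 0 Hp); try lia.
  - fold x0. ring.
  - intros k Hk Hk0. destruct (Nat.eq_dec k (r - 1)) as [->|].
    + rewrite last_node_opp. fold x0. ring.
    + rewrite HQk by lia. ring.
Qed.

Lemma u_lower_bound n eta : (2 * r - 2 <= n)%nat -> in_Xi n eta -> Rabs (nth 0 xs 0) <= u eta.
Proof.
  intros Hn Heta. destruct (Nat.eq_dec r 1) as [r1|r2].
  { assert (E := last_node_opp). rewrite r1 in E. simpl in E.
    replace (nth 0 xs 0) with 0 by lra. rewrite Rabs_R0. apply u_nonneg. }
  destruct exists_interior_node_poly as [Q [HQ [HQ0 HQk]]]; [lia|].
  assert (HQ2 : deg_le (fun x => Q x * Q x) n) by (apply deg_le_mono with (r - 2 + (r - 2))%nat; auto using deg_le_mul; lia).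
  assert (HxQ2 : deg_le (fun x => x * x * (Q x * Q x)) n).
  { apply deg_le_mono with (2 + (r - 2 + (r - 2)))%nat; [lia|].
    apply deg_le_mul; [apply (deg_le_mul _ _ 1 1); apply deg_le_id | auto using deg_le_mul]. }
  assert (Hpos : 0 < unif (fun x => Q x * Q x)) by (apply (unif_sq_pos Q (r - 2) 0); auto; lia).
  assert (Hle : fint eta (fun x => x * x * (Q x * Q x)) <= fint eta (fun x => u eta * u eta * (Q x * Q x))).
  { destruct Heta as [_ [Hatoms _]]. apply fint_le.
    - intros p Hp. left; apply Hatoms; auto.
    - intros p Hp. apply Rmult_le_compat_r; [apply Rle_0_sqr|].
      assert (Hu := u_ge_atom eta p Hp). rewrite <- (Rabs_pos_eq (u eta)) in Hu by apply u_nonneg.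
      apply Rsqr_le_abs_1 in Hu. exact Hu. }
  rewrite fint_scal, !(fint_eq_unif n) in Hle by auto.
  rewrite unif_sq_interior_node_poly in Hle by (auto; lia).
  apply Rmult_le_reg_r in Hle; auto.
  rewrite <- (Rabs_pos_eq (u eta)) by apply u_nonneg. now apply Rsqr_le_abs_0.
Qed.

End GaussLegendre.

Theorem lemmaA1 (n : nat) (xs : list R)
  (Hlen : length xs = (n / 2 + 1)%nat)
  (Hsorted : forall i j : nat, (i < j < length xs)%nat ->
             nth i xs 0 < nth j xs 0)
  (Hzeros : forall x : R, legendre (n / 2 + 1) x = 0 <-> In x xs) :
  in_Xi n (gl_measure xs) /\
  u (gl_measure xs) = Rabs (nth 0 xs 0) /\
  (forall eta : fmeasure, in_Xi n eta -> Rabs (nth 0 xs 0) <= u eta).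
Proof.
  set (r := (n / 2 + 1)%nat) in *.
  assert (Hr : (0 < r)%nat) by lia.
  assert (Hn : (2 * r - 2 <= n < 2 * r)%nat).
  { pose proof (Nat.div_mod_eq n 2); pose proof (Nat.mod_upper_bound n 2); unfold r; lia. }
  split; [|split].
  - apply gl_measure_in_Xi with r; auto; lia.
  - apply u_gl_measure with r; auto.
  - intros eta Heta. apply u_lower_bound with r n; auto; lia.
Qed.
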